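(* Assume the feasible set of the mixed-integer semidefinite program $$\min\{\langle C,X\rangle : \mathcal{A}(X)=b,\ X\succeq \mathbf{0},\ X_{ij}\in B_{ij}\ \forall (i,j)\in\mathcal{J}\}$$ is nonempty and bounded. Let $z_{LD}=\sup\{g(S,\lambda): S\succeq\mathbf{0},\ \lambda\in\mathbb{R}^{m_1}\}$ with $g(S,\lambda)=\min\{\langle C,X\rangle-\langle S,X\rangle+\lambda^\top(\mathcal{A}_1(X)-b_1): X\in P\}$, and let $\hat z$ denote the optimal value of $$\min\{\langle C,X\rangle: \mathcal{A}_1(X)=b_1,\ X\succeq\mathbf{0},\ X\in\mathrm{conv}(P)\},$$ provided it exists. Then $z_{LD}=\hat z$.
   Context: $\mathcal{S}^n$ denotes the real symmetric $n\times n$ matrices with $\langle X,Y\rangle=\mathrm{tr}(XY)$; $X\succeq\mathbf{0}$ means positive semidefinite. $C\in\mathcal{S}^n$, $b\in\mathbb{R}^m$, $\mathcal{A}:\mathcal{S}^n\to\mathbb{R}^m$ linear with $\mathcal{A}(X)_i=\langle A_i,X\rangle$. $\mathcal{J}\subseteq[n]\times[n]$ and for $(i,j)\in\mathcal{J}$, $B_{ij}\subseteq\mathbb{Z}$ is a finite set. The constraints $\mathcal{A}(X)=b$ are split into $\mathcal{A}_1(X)=b_1$ ($b_1\in\mathbb{R}^{m_1}$) and $\mathcal{A}_2(X)=b_2$, and $P=\{X\in\mathcal{S}^n:\mathcal{A}_2(X)=b_2,\ X_{ij}\in B_{ij}\ \forall(i,j)\in\mathcal{J}\}$, which is assumed bounded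 (e.g. after adding bounds on the continuous variables to $\mathcal{A}_2(X)=b_2$). *)

From HB Require Import structures.
From mathcomp Require Import all_boot all_order all_algebra.
From mathcomp Require Import classical_sets reals constructive_ereal ereal.
Set Implicit Arguments. Unset Strict Implicit. Unset Printing Implicit Defensive.
Import Order.TTheory GRing.Theory Num.Theory.
Local Open Scope ring_scope.
Local Open Scope classical_set_scope.

Section Defs.
Variables (R : realType) (n : nat).

Definition symmx (X : 'M[R]_n) : Prop := X^T = X.

Definition inner (X Y : 'M[R]_n) : R := \tr (X *m Y).

Definition psd (X : 'M[R]_n) : Prop :=
  symmx X /\ forall v : 'cV[R]_n, 0 <= (v^T *m X *m v) 0 0.

Definition lin_eq (m : nat) (A : 'I_m -> 'M[R]_n) (b : 'I_m -> R)
  (X : 'M[R]_n) : Prop := forall i, inner (A i) X = b i.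

Definition Pset (m2 : nat) (A2 : 'I_m2 -> 'M[R]_n) (b2 : 'I_m2 -> R)
  (J : {set 'I_n * 'I_n}) (B : 'I_n -> 'I_n -> seq int) : set 'M[R]_n :=
  [set X | symmx X /\ lin_eq A2 b2 X /\
           forall i j, (i, j) \in J -> exists2 z, z \in B i j & X i j = z%:~R].

Definition conv (Q : set 'M[R]_n) : set 'M[R]_n :=
  [set X | exists k (w : 'I_k -> R) (Y : 'I_k -> 'M[R]_n),
     [/\ forall t, 0 <= w t, \sum_(t < k) w t = 1, forall t, Q (Y t)
       & X = \sum_(t < k) w t *: Y t]].

Definition mx_bounded (Q : set 'M[R]_n) : Prop :=
  exists M : R, forall X, Q X -> forall i j, `|X i j| <= M.

End Defs.

From HB Require Import structures.
From mathcomp Require Import all_boot all_order all_algebra.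
From mathcomp Require Import classical_sets reals constructive_ereal ereal.
From mathcomp Require Import boolp topology normedtype derive.
From mathcomp Require Import ring lra.
Set Implicit Arguments. Unset Strict Implicit. Unset Printing Implicit Defensive.
Import Order.TTheory GRing.Theory Num.Theory numFieldTopology.Exports.
Local Open Scope ring_scope.
Local Open Scope classical_set_scope.

(* Weak duality holds pointwise: the Lagrangian is affine, so at a convex
   combination X of points of P some point of P has Lagrangian value at most
   the one at X, which is at most <C, X> since <S, X> >= 0 for PSD S and X.

   Conversely, suppose that a < <C, X> for every X feasible for the relaxation.
   Then the residual (A1 X - b1, X - Z, <C, X> - s) never vanishes on the convex
   domain X in conv P, Z PSD, s <= a.  Since conv P is compact (Caratheodory),
   a residual r = (alpha, E, rho) of least norm is attained, and its optimality
   condition <r, r' - r> >= 0 shows that -E is PSD and rho > 0; the multipliers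
   S = -E / rho and lambda = alpha / rho then bound the Lagrangian below by a
   on P. *)

Section QuadraticForm.
Variables (R : realType) (n : nat).
Implicit Types (S X Y : 'M[R]_n) (u v : 'cV[R]_n).

Definition bform X u v := (u^T *m X *m v) 0 0.
Definition qform X v := bform X v v.

Local Notation e_ k := (delta_mx k 0 : 'cV[R]_n).

Lemma psdE X : psd X <-> symmx X /\ forall v, 0 <= qform X v.
Proof. by []. Qed.

Lemma symmxP X : symmx X <-> forall i j, X i j = X j i.
Proof.
split=> [sX i j|sX]; first by rewrite -[in LHS]sX mxE.
by apply/matrixP => i j; rewrite mxE sX.
Qed.

Lemma qformE X v : qform X v = \sum_i \sum_j v i 0 * X i j * v j 0.
Proof.
rewrite /qform /bform mxE exchange_big; apply: eq_bigr => j _.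
by rewrite mxE mulr_suml; apply: eq_bigr => i _; rewrite !mxE.
Qed.

Lemma bformDr X u v w : bform X u (v + w) = bform X u v + bform X u w.
Proof. by rewrite /bform mulmxDr mxE. Qed.

Lemma bformDl X u v w : bform X (u + v) w = bform X u w + bform X v w.
Proof. by rewrite /bform linearD /= !mulmxDl mxE. Qed.

Lemma bformZr X a u v : bform X u (a *: v) = a * bform X u v.
Proof. by rewrite /bform -scalemxAr mxE. Qed.

Lemma bformZl X a u v : bform X (a *: u) v = a * bform X u v.
Proof. by rewrite /bform linearZ /= -!scalemxAl mxE. Qed.

Lemma bformC X u v : symmx X -> bform X u v = bform X v u.
Proof.
by move=> sX; rewrite /bform -[u^T *m X *m v]trmxK [LHS]mxE !trmx_mul trmxK sX mulmxA.
Qed.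

Lemma bform_delta X i j : bform X (e_ i) (e_ j) = X i j.
Proof. by rewrite /bform trmx_delta -rowE -colE !mxE. Qed.

Lemma qformD X u v : symmx X ->
  qform X (u + v) = qform X u + 2 * bform X u v + qform X v.
Proof.
move=> sX; rewrite /qform !(bformDl, bformDr) (bformC v u sX); ring.
Qed.

Lemma qformZ X a v : qform X (a *: v) = a ^+ 2 * qform X v.
Proof. by rewrite /qform bformZl bformZr mulrA expr2. Qed.

Lemma qform_delta X k : qform X (e_ k) = X k k.
Proof. exact: bform_delta. Qed.

Lemma bform_delta_col X u k : bform X u (e_ k) = (u^T *m col k X) 0 0.
Proof. by rewrite /bform -mulmxA -colE. Qed.

Lemma qform_mxD X Y v : qform (X + Y) v = qform X v + qform Y v.
Proof. by rewrite /qform /bform mulmxDr mulmxDl mxE. Qed.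

Lemma qform_mxZ a X v : qform (a *: X) v = a * qform X v.
Proof. by rewrite /qform /bform -scalemxAr -scalemxAl mxE. Qed.

Lemma qform_mxN X v : qform (- X) v = - qform X v.
Proof. by rewrite -scaleN1r qform_mxZ mulN1r. Qed.

Definition rank1 v : 'M[R]_n := v *m v^T.

Lemma rank1E v i j : rank1 v i j = v i 0 * v j 0.
Proof. by rewrite !mxE big_ord1 mxE. Qed.

Lemma rank1Z a v : rank1 (a *: v) = a ^+ 2 *: rank1 v.
Proof. by rewrite /rank1 linearZ /= -scalemxAl -scalemxAr scalerA expr2. Qed.

Lemma qform_rank1 v u : qform (rank1 v) u = (u^T *m v) 0 0 ^+ 2.
Proof.
rewrite /qform /bform /rank1 !mulmxA -mulmxA [(_ *m _) 0 0]mxE big_ord1.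
by rewrite -[v^T *m u]trmxK trmx_mul trmxK [(_^T) 0 0]mxE expr2.
Qed.

Lemma inner_rank1 S v : inner S (rank1 v) = qform S v.
Proof.
rewrite /inner /rank1 mulmxA mxtrace_mulC mulmxA /qform /bform.
by rewrite /mxtrace big_ord1 mxE.
Qed.

Lemma psd_symmx X : psd X -> symmx X.
Proof. by case. Qed.

Lemma psd_qform_ge0 X v : psd X -> 0 <= qform X v.
Proof. by case=> _; apply. Qed.

Lemma psdD X Y : psd X -> psd Y -> psd (X + Y).
Proof.
move=> /psdE[sX pX] /psdE[sY pY]; apply/psdE; split.
  by rewrite /symmx linearD /= sX sY.
by move=> v; rewrite qform_mxD addr_ge0.
Qed.

Lemma psdZ a X : 0 <= a -> psd X -> psd (a *: X).
Proof.
move=> a0 /psdE[sX pX]; apply/psdE; split; first by rewrite /symmx linearZ /= sX.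
by move=> v; rewrite qform_mxZ mulr_ge0.
Qed.

Lemma psd_rank1 v : psd (rank1 v).
Proof.
apply/psdE; split; first by rewrite /symmx /rank1 trmx_mul trmxK.
by move=> u; rewrite qform_rank1 sqr_ge0.
Qed.

Lemma psd0 : psd (0 : 'M[R]_n).
Proof. by rewrite -(scale0r (rank1 0)); apply/psdZ/psd_rank1. Qed.

Lemma psd_diag0_row X k j : psd X -> X k k = 0 -> X k j = 0.
Proof.
move=> /psdE[sX pX] Xkk; have [->//|jk] := eqVneq j k.
have [//|Xkj] := eqVneq (X k j) 0; exfalso.
(* Along t e_k + e_j the form is affine in t, with slope 2 X k j. *)
have := pX (- (X j j + 1) / (2 * X k j) *: e_ k + e_ j).
rewrite qformD // qformZ bformZl qform_delta bform_delta Xkk mulr0 add0r.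
rewrite mulrCA divfK ?mulf_neq0 ?pnatr_eq0 // qform_delta; lra.
Qed.

Lemma psd_schur X k : psd X -> X k k != 0 ->
  psd (X - (X k k)^-1 *: rank1 (col k X)).
Proof.
move=> /psdE[sX pX] Xkk; apply/psdE; split.
  by rewrite /symmx linearB linearZ /= sX (psd_symmx (psd_rank1 _)).
move=> u; set b := (u^T *m col k X) 0 0.
have := pX (u + (- b / X k k) *: e_ k).
rewrite qformD // qformZ bformZr bform_delta_col -/b qform_delta -addrA.
rewrite qform_mxD qform_mxN qform_mxZ qform_rank1 -/b.
suff -> : 2 * (- b / X k k * b) + (- b / X k k) ^+ 2 * X k k =
          - ((X k k)^-1 * b ^+ 2) by [].
by field.
Qed.

Lemma psd_diag0 X : psd X -> (forall i, X i i = 0) -> X = 0.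
Proof.
by move=> pX X0; apply/matrixP => i j; rewrite mxE; apply: psd_diag0_row.
Qed.

(* Symmetric Gaussian elimination, by induction on the number of nonzero
   diagonal entries. *)
Lemma psd_sum_rank1 X : psd X -> exists s, X = \sum_(v <- s) rank1 v.
Proof.
move: {-1}#|_| (leqnn #|[pred i | X i i != 0]|) => N.
elim: N X => [|N IH] X suppN pX.
  exists [::]; rewrite big_nil; apply: psd_diag0 => // i.
  by move: suppN; rewrite leqn0 => /eqP/card0_eq/(_ i); rewrite !inE => /negbFE/eqP.
have [k /= Xkk|diag0] := pickP [pred i | X i i != 0]; last first.
  by exists [::]; rewrite big_nil; apply: psd_diag0 => // i; apply/eqP/negbFE/diag0.
have Xkk_ge0 : 0 <= X k k by rewrite -qform_delta psd_qform_ge0.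
set x := (Num.sqrt (X k k))^-1 *: col k X.
have rank1x : rank1 x = (X k k)^-1 *: rank1 (col k X).
  by rewrite rank1Z exprVn sqr_sqrtr.
have pX' : psd (X - rank1 x) by rewrite rank1x; apply: psd_schur.
have [|s eX'] := IH _ _ pX'.
  rewrite -ltnS; apply: leq_trans suppN.
  rewrite [#|[pred i | X i i != 0]|](cardD1 k) inE /= Xkk add1n ltnS.
  apply: subset_leq_card; apply/fintype.subsetP => i.
  rewrite !inE /= rank1x 3!mxE rank1E !mxE.
  have [->|ik /=] := eqVneq i k; first by rewrite (mulKf Xkk) subrr eqxx.
  by apply: contraNN => /eqP Xii; rewrite Xii (psd_diag0_row k pX Xii) !mulr0 subrr.
by exists (x :: s); rewrite big_cons -eX' addrC subrK.
Qed.

Lemma innerDr S X Y : inner S (X + Y) = inner S X + inner S Y.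
Proof. by rewrite /inner mulmxDr mxtraceD. Qed.

Lemma innerZr S a X : inner S (a *: X) = a * inner S X.
Proof. by rewrite /inner -scalemxAr mxtraceZ. Qed.

Lemma innerBr S X Y : inner S (X - Y) = inner S X - inner S Y.
Proof. by rewrite /inner mulmxBr raddfB. Qed.

Lemma inner_sumr (I : Type) (r : seq I) (P : pred I) S (F : I -> 'M[R]_n) :
  inner S (\sum_(i <- r | P i) F i) = \sum_(i <- r | P i) inner S (F i).
Proof. by rewrite /inner mulmx_sumr raddf_sum. Qed.

Lemma innerZl a S X : inner (a *: S) X = a * inner S X.
Proof. by rewrite /inner -scalemxAl mxtraceZ. Qed.

Lemma innerDl S Y X : inner (S + Y) X = inner S X + inner Y X.
Proof. by rewrite /inner mulmxDl mxtraceD. Qed.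

Lemma innerNl S X : inner (- S) X = - inner S X.
Proof. by rewrite -scaleN1r innerZl mulN1r. Qed.

Lemma inner_suml (I : Type) (r : seq I) (F : I -> 'M[R]_n) X :
  inner (\sum_(i <- r) F i) X = \sum_(i <- r) inner (F i) X.
Proof. by rewrite /inner mulmx_suml raddf_sum. Qed.

Lemma inner_entries S X : symmx S -> inner S X = \sum_i \sum_j S i j * X i j.
Proof.
move=> /symmxP sS; rewrite /inner /mxtrace exchange_big; apply: eq_bigr => j _.
by rewrite mxE; apply: eq_bigr => i _; rewrite sS.
Qed.

Lemma inner_norm_le S X M : (forall i j, `|X i j| <= M) ->
  `|inner S X| <= \sum_i \sum_j `|S i j| * M.
Proof.
move=> XM; rewrite /inner /mxtrace; apply: le_trans (ler_norm_sum _ _ _) _.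
apply: ler_sum => i _; rewrite mxE; apply: le_trans (ler_norm_sum _ _ _) _.
by apply: ler_sum => j _; rewrite normrM ler_wpM2l.
Qed.

Lemma inner_psd_ge0 S X : psd S -> psd X -> 0 <= inner S X.
Proof.
move=> pS /psd_sum_rank1[s ->]; rewrite inner_sumr.
by apply: sumr_ge0 => v _; rewrite inner_rank1 psd_qform_ge0.
Qed.

End QuadraticForm.

Section ConvexHull.
Variables (R : realType) (n : nat) (Q : set 'M[R]_n).

Definition convn k (X : 'M[R]_n) := exists (w : 'I_k -> R) (Y : 'I_k -> 'M[R]_n),
  [/\ forall t, 0 <= w t, \sum_t w t = 1, forall t, Q (Y t)
    & X = \sum_t w t *: Y t].

Lemma convnP X : conv Q X <-> exists k, convn k X.
Proof. by split=> [[k [w [Y H]]]|[k [w [Y H]]]]; exists k, w, Y. Qed.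

Lemma sub_conv X : Q X -> conv Q X.
Proof.
move=> QX; exists 1%N, (fun=> 1), (fun=> X).
by split=> //; rewrite big_ord1 ?scale1r.
Qed.

Lemma conv_segment X Y t : conv Q X -> conv Q Y -> 0 <= t <= 1 ->
  conv Q ((1 - t) *: X + t *: Y).
Proof.
move=> [k1 [w1 [Y1 [w10 s1 Q1 ->]]]] [k2 [w2 [Y2 [w20 s2 Q2 ->]]]] /andP[t0 t1].
have sl a : fintype.split (lshift k2 a) = inl a := unsplitK (inl a).
have sr b : fintype.split (rshift k1 b) = inr b := unsplitK (inr b).
exists (k1 + k2)%N.
exists (fun i => match fintype.split i with inl a => (1 - t) * w1 a | inr b => t * w2 b end).
exists (fun i => match fintype.split i with inl a => Y1 a | inr b => Y2 b end).
split.
- by move=> i; case: fintype.split => a; rewrite mulr_ge0 ?subr_ge0.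
- rewrite big_split_ord /=.
  under eq_bigr => a _ do rewrite sl.
  under [X in _ + X]eq_bigr => b _ do rewrite sr.
  by rewrite -!mulr_sumr s1 s2 !mulr1 subrK.
- by move=> i; case: fintype.split.
- rewrite big_split_ord /=.
  under [X in _ = X + _]eq_bigr => a _ do rewrite sl.
  under [X in _ = _ + X]eq_bigr => b _ do rewrite sr.
  by rewrite !scaler_sumr; congr (_ + _); apply: eq_bigr => i _; rewrite scalerA.
Qed.

Lemma conv_entry_bound M X : (forall Y, Q Y -> forall i j, `|Y i j| <= M) ->
  conv Q X -> forall i j, `|X i j| <= M.
Proof.
move=> QM [k [w [Y [w0 s1 QY ->]]]] i j.
rewrite summxE; apply: le_trans (ler_norm_sum _ _ _) _.
rewrite -[M]mul1r -s1 mulr_suml; apply: ler_sum => t _.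
by rewrite mxE normrM ger0_norm // ler_wpM2l ?QM.
Qed.

Lemma conv_symmx X : (forall Y, Q Y -> symmx Y) -> conv Q X -> symmx X.
Proof.
move=> Qsym [k [w [Y [_ _ QY ->]]]]; rewrite /symmx raddf_sum /=.
by apply: eq_bigr => t _; rewrite linearZ /= Qsym.
Qed.

Lemma convn_gt0 k X : convn k X -> (0 < k)%N.
Proof.
case: k => // [[w [Y [_ s1 _ _]]]]; move: s1; rewrite big_ord0 => /eqP.
by rewrite eq_sym oner_eq0.
Qed.

Lemma convnS k X : convn k X -> convn k.+1 X.
Proof.
move=> cX; have k_gt0 := convn_gt0 cX; move: cX => [w [Y [w0 s1 QY ->]]].
exists (fun t => if unlift ord_max t is Some t' then w t' else 0).
exists (fun t => if unlift ord_max t is Some t' then Y t' else Y (Ordinal k_gt0)).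
split.
- by move=> t; case: unlift.
- rewrite (bigD1_ord ord_max) //= unlift_none add0r -s1.
  by apply: eq_bigr => t _; rewrite liftK.
- by move=> t; case: unlift.
- rewrite (bigD1_ord ord_max) //= unlift_none scale0r add0r.
  by apply: eq_bigr => t _; rewrite liftK.
Qed.

Lemma affine_dependence k (Y : 'I_k -> 'M[R]_n) : ((n * n).+1 < k)%N ->
  exists2 u : 'I_k -> R, \sum_t u t = 0 /\ \sum_t u t *: Y t = 0 & exists t, u t != 0.
Proof.
move=> nk; pose M := row_mx (const_mx 1 : 'cV[R]_k) (\matrix_t mxvec (Y t)).
have [u /sub_kermxP uM u0] : exists2 u : 'rV_k, (u <= kermx M)%MS & u != 0.
  apply/rowV0Pn; rewrite -mxrank_eq0 mxrank_ker subn_eq0 -ltnNge.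
  exact: leq_ltn_trans (rank_leq_col M) _.
move: uM; rewrite mul_mx_row => /eqP; rewrite row_mx_eq0 => /andP[/eqP su /eqP sY].
exists (fun t => u 0 t); last exact/rV0Pn.
split.
  transitivity ((u *m const_mx 1 : 'M[R]_1) 0 0); last by rewrite su mxE.
  by rewrite mxE; apply: eq_bigr => t _; rewrite mxE mulr1.
apply: (can_inj mxvecK); rewrite linear0 -sY mulmx_sum_row linear_sum.
by apply: eq_bigr => t _; rewrite rowK linearZ.
Qed.

Lemma sum0_exists_gt0 (I : finType) (u : I -> R) :
  \sum_i u i = 0 -> (exists i, u i != 0) -> exists i, 0 < u i.
Proof.
move=> su [i0 ui0]; apply/not_existsP => u_le0.
have Nu_ge0 i : 0 <= - u i by rewrite oppr_ge0 leNgt; apply/negP/u_le0.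
have := @psumr_eq0P _ _ predT (fun i => - u i) (fun i _ => Nu_ge0 i).
rewrite sumrN su oppr0 => /(_ erefl i0 isT) /eqP; rewrite oppr_eq0.
by rewrite (negPf ui0).
Qed.

(* Move the weights along an affine dependence until one of them vanishes. *)
Lemma convn_reduce k X : (n * n < k)%N -> convn k.+1 X -> convn k X.
Proof.
move=> nk [w [Y [w0 s1 QY eX]]].
have [u [su suY] /(sum0_exists_gt0 su)[t1 ut1]] := affine_dependence Y nk.
have [s us smin] := @arg_minP _ _ _ t1 [pred t | 0 < u t] (fun t => w t / u t) ut1.
pose w' t := w t - w s / u s * u t.
have w'_ge0 t : 0 <= w' t.
  rewrite subr_ge0; have [ut|ut] := ltP 0 (u t).
    by rewrite -ler_pdivlMr // smin.
  by apply: le_trans (w0 t); rewrite mulr_ge0_le0 ?divr_ge0 ?(ltW us).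
have w's : w' s = 0 by rewrite /w' mulfVK ?subrr // gt_eqF.
have sw' : \sum_t w' t = 1 by rewrite sumrB -mulr_sumr su mulr0 subr0.
have eX' : X = \sum_t w' t *: Y t.
  under eq_bigr => t _ do rewrite scalerBl -scalerA.
  by rewrite sumrB -scaler_sumr suY scaler0 subr0.
exists (fun t => w' (lift s t)), (fun t => Y (lift s t)); split => //.
- by move: sw'; rewrite (bigD1_ord s) //= w's add0r.
- by rewrite eX' (bigD1_ord s) //= w's scale0r add0r.
Qed.

Lemma convn_widen k l X : (k <= l)%N -> convn k X -> convn l X.
Proof.
elim: l => [|l IH]; first by rewrite leqn0 => /eqP ->.
by rewrite leq_eqVlt ltnS => /orP[/eqP -> //|kl] /(IH kl)/convnS.
Qed.

Lemma caratheodory X : conv Q X -> convn (n * n).+1 X.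
Proof.
move=> /convnP[k]; elim: k => [/convn_gt0 //|k IH cX].
have [kN|Nk] := leqP k.+1 (n * n).+1; first exact: convn_widen cX.
exact/IH/(convn_reduce Nk).
Qed.

End ConvexHull.

Section PointwiseTopology.
Variables (R : realType) (I : eqType).
Local Notation T := {ptws I -> R}.
Implicit Types (f g : T -> R).

Lemma continuous_coord i : continuous (fun z : T => z i).
Proof. exact: (@proj_continuous I (fun=> R) i). Qed.

Lemma continuous_cst_ptws (c : R) : continuous (fun _ : T => c).
Proof. exact: cst_continuous. Qed.

Lemma continuousD_ptws f g :
  continuous f -> continuous g -> continuous (fun z => f z + g z).
Proof. by move=> cf cg x; exact: (@continuousD R R^o T f g x (cf x) (cg x)). Qed.

Lemma continuousN_ptws f : continuous f -> continuous (fun z => - f z).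
Proof. by move=> cf x; exact: (@continuousN R R^o T f x (cf x)). Qed.

Lemma continuousB_ptws f g :
  continuous f -> continuous g -> continuous (fun z => f z - g z).
Proof. by move=> cf cg; apply/continuousD_ptws/continuousN_ptws. Qed.

Lemma continuousM_ptws f g :
  continuous f -> continuous g -> continuous (fun z => f z * g z).
Proof. by move=> cf cg x; exact: (@continuousM R T f g x (cf x) (cg x)). Qed.

Lemma continuous_sum_ptws (J : Type) (s : seq J) (F : J -> T -> R) :
  (forall j, continuous (F j)) -> continuous (fun z => \sum_(j <- s) F j z).
Proof.
move=> cF; elim: s => [|j s IH].
  rewrite (_ : (fun z => _) = fun=> 0); first exact: continuous_cst_ptws.
  by apply/funext => z; rewrite big_nil.
rewrite (_ : (fun z => _) = fun z => F j z + \sum_(j0 <- s) F j0 z).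
  exact: continuousD_ptws.
by apply/funext => z; rewrite big_cons.
Qed.

Lemma closed_eqfun f g : continuous f -> continuous g -> closed [set z | f z = g z].
Proof.
move=> cf cg; rewrite (_ : [set z | _] = (fun z => f z - g z) @^-1` [set x | x = 0]).
  by apply: preimage_closed; [move=> z _; apply: continuousB_ptws | apply: closed_eq].
by apply/seteqP; split => z /= => [->|/eqP]; rewrite ?subrr // subr_eq0 => /eqP.
Qed.

Lemma closed_lefun f g : continuous f -> continuous g -> closed [set z | f z <= g z].
Proof.
move=> cf cg; rewrite (_ : [set z | _] = (fun z => g z - f z) @^-1` [set x | 0 <= x]).
  by apply: preimage_closed; [move=> z _; apply: continuousB_ptws | apply: closed_ge].
by apply/seteqP; split => z /=; rewrite subr_ge0.
Qed.

Lemma closed_forall (J : Type) (A : J -> set T) :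
  (forall j, closed (A j)) -> closed [set z | forall j, A j z].
Proof.
move=> cA; rewrite (_ : [set z | _] = \bigcap_(j in [set: J]) A j).
  by apply: closed_bigI => j _.
by apply/seteqP; split => z /= Az j //; apply: Az.
Qed.

Lemma closed_implyb (b : bool) (A : set T) : closed A -> closed [set z | b -> A z].
Proof.
case: b => cA; last by rewrite (_ : [set z | _] = setT) ?closedT //; apply/seteqP.
by rewrite (_ : [set z | _] = A) //; apply/seteqP; split => z /= => [/(_ erefl)|].
Qed.

Lemma closed_exists_seq (J : eqType) (s : seq J) (A : J -> set T) :
  (forall j, closed (A j)) -> closed [set z | exists2 j, j \in s & A j z].
Proof.
move=> cA; rewrite (_ : [set z | _] = \big[setU/set0]_(j <- s) A j).
  by apply: closed_bigsetU => j _.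
elim: s => [|j s IH]; first by rewrite big_nil; apply/seteqP; split => z //= [].
rewrite big_cons -IH; apply/seteqP; split => z /=.
  by move=> [j']; rewrite in_cons => /orP[/eqP ->|js] Az; [left | right; exists j'].
move=> [Az|[j' js Az]]; first by exists j; rewrite ?mem_head.
by exists j'; rewrite // in_cons js orbT.
Qed.

Lemma bounded_closed_argmin (D : set T) (F : T -> R) (M : R) :
  D !=set0 -> closed D -> (forall z, D z -> forall i, `|z i| <= M) ->
  continuous F -> exists2 z0, D z0 & forall z, D z -> F z0 <= F z.
Proof.
move=> D0 Dcl DM cF.
have box_cpt : compact [set z : T | forall i, `[-M, M] (z i)].
  exact: (@tychonoff I (fun=> R) _ (fun=> @segment_compact R (-M) M)).
have Dcp : compact D.
  apply: (subclosed_compact Dcl box_cpt) => z Dz i /=.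
  by rewrite in_itv /= -ler_norml DM.
have [z0 Dz0 z0min] := compact_EVT_min D0 Dcp (continuous_subspaceT cF).
by exists z0 => [|z Dz]; [rewrite inE in Dz0 | apply: z0min; rewrite inE].
Qed.

End PointwiseTopology.

Section PointwiseMatrices.
Variables (R : realType) (n : nat) (I : eqType).
Local Notation T := {ptws I -> R}.
Variable Mz : T -> 'M[R]_n.
Hypothesis Mz_cont : forall i j, continuous (fun z => Mz z i j).

Lemma continuous_inner_ptws S : continuous (fun z => inner S (Mz z)).
Proof.
rewrite (_ : (fun z => _) = fun z => \sum_i \sum_j S i j * Mz z j i).
  apply: continuous_sum_ptws => i; apply: continuous_sum_ptws => j.
  by apply: continuousM_ptws => //; apply: continuous_cst_ptws.
by apply/funext => z; rewrite /inner /mxtrace; apply: eq_bigr => i _; rewrite mxE.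
Qed.

Lemma closed_symmx_ptws : closed [set z | symmx (Mz z)].
Proof.
rewrite (_ : [set z | _] = [set z | forall i j, Mz z i j = Mz z j i]).
  by do 2 apply: closed_forall => ?; apply: closed_eqfun.
by apply/seteqP; split=> z /symmxP.
Qed.

Lemma closed_psd_ptws : closed [set z | psd (Mz z)].
Proof.
apply: closedI; first exact: closed_symmx_ptws.
apply: closed_forall => v; apply: closed_lefun; first exact: continuous_cst_ptws.
rewrite (_ : (fun z => _) = fun z => \sum_i \sum_j v i 0 * Mz z i j * v j 0).
  apply: continuous_sum_ptws => i; apply: continuous_sum_ptws => j.
  apply: continuousM_ptws; last exact: continuous_cst_ptws.
  by apply: continuousM_ptws => //; apply: continuous_cst_ptws.
by apply/funext => z; rewrite -qformE.
Qed.

Lemma closed_Pset_ptws m (A : 'I_m -> 'M[R]_n) b J B :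
  closed [set z | Pset A b J B (Mz z)].
Proof.
apply: closedI; first exact: closed_symmx_ptws.
apply: closedI.
  apply: closed_forall => l; apply: closed_eqfun; last exact: continuous_cst_ptws.
  exact: continuous_inner_ptws.
apply: closed_forall => i; apply: closed_forall => j; apply: closed_implyb.
apply: closed_exists_seq => c; apply: closed_eqfun => //.
exact: continuous_cst_ptws.
Qed.

End PointwiseMatrices.

Section NearestPoint.
Variables (R : realType) (I : finType).
Implicit Types r : I -> R.

Definition sqnorm r := \sum_i r i ^+ 2.

Lemma sqnorm_ge0 r : 0 <= sqnorm r.
Proof. by apply: sumr_ge0 => i _; apply: sqr_ge0. Qed.

Lemma sqr_le_sqnorm r i : r i ^+ 2 <= sqnorm r.
Proof. by rewrite /sqnorm (bigD1 i) //= lerDl sumr_ge0 // => j _; apply: sqr_ge0. Qed.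

Lemma sqnorm_eq0 r : sqnorm r = 0 -> forall i, r i = 0.
Proof.
move=> r0 i; apply/eqP; rewrite -sqrf_eq0; apply/eqP.
by apply: (psumr_eq0P (fun j _ => sqr_ge0 (r j)) r0).
Qed.

Lemma ge0_of_quadratic_ge0 (G1 G2 : R) : 0 <= G2 ->
  (forall t, 0 < t <= 1 -> 0 <= 2 * t * G1 + t ^+ 2 * G2) -> 0 <= G1.
Proof.
move=> G2_ge0 quad_ge0; rewrite leNgt; apply/negP => G1_lt0.
have den_gt0 : 0 < G2 - G1 by lra.
pose t := - G1 / (G2 - G1).
have t_gt0 : 0 < t by rewrite divr_gt0 // oppr_gt0.
have t_le1 : t <= 1 by rewrite ler_pdivrMr // mul1r; lra.
have tG2 : t * G2 <= - G1.
  rewrite /t mulrAC ler_pdivrMr // -subr_ge0.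
  have -> : - G1 * (G2 - G1) - - G1 * G2 = G1 ^+ 2 by ring.
  exact: sqr_ge0.
have := quad_ge0 t; rewrite t_gt0 t_le1 => /(_ isT).
rewrite (_ : _ + _ = t * (2 * G1 + t * G2)); last by ring.
by rewrite pmulr_rge0 //; lra.
Qed.

Lemma nearest_point_dot (V : set (I -> R)) r0 :
  (forall r, V r -> forall t, 0 < t <= 1 -> V (fun i => r0 i + t * (r i - r0 i))) ->
  (forall r, V r -> sqnorm r0 <= sqnorm r) ->
  forall r, V r -> sqnorm r0 <= \sum_i r0 i * r i.
Proof.
move=> Vseg r0min r Vr; rewrite -subr_ge0.
apply: (@ge0_of_quadratic_ge0 _ (sqnorm (fun i => r i - r0 i))); first exact: sqnorm_ge0.
move=> t t01; have := r0min _ (Vseg r Vr t t01).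
rewrite -subr_ge0 /sqnorm -sumrB mulr_sumr -sumrB mulr_sumr -big_split /=.
by congr (0 <= _); apply: eq_bigr => i _; ring.
Qed.

End NearestPoint.

Section LagrangianDuality.
Variables (R : realType) (n m1 m2 : nat) (C : 'M[R]_n)
  (A1 : 'I_m1 -> 'M[R]_n) (b1 : 'I_m1 -> R)
  (A2 : 'I_m2 -> 'M[R]_n) (b2 : 'I_m2 -> R)
  (J : {set 'I_n * 'I_n}) (B : 'I_n -> 'I_n -> seq int).
Local Notation P := (Pset A2 b2 J B).
Implicit Types (S X Y Z : 'M[R]_n) (lam : 'I_m1 -> R).

Definition lagrangian S lam X :=
  inner C X - inner S X + \sum_(i < m1) lam i * (inner (A1 i) X - b1 i).

Lemma lagrangianE S lam X : lagrangian S lam X =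
  inner (C - S + \sum_i lam i *: A1 i) X - \sum_i lam i * b1 i.
Proof.
rewrite /lagrangian !innerDl innerNl inner_suml -!addrA -sumrB.
by do 2 congr (_ + _); apply: eq_bigr => i _; rewrite innerZl mulrBr.
Qed.

Lemma lagrangian_comb S lam k (w : 'I_k -> R) (Y : 'I_k -> 'M[R]_n) :
  \sum_t w t = 1 ->
  lagrangian S lam (\sum_t w t *: Y t) = \sum_t w t * lagrangian S lam (Y t).
Proof.
move=> w1; rewrite lagrangianE inner_sumr; set c := \sum_(i < m1) lam i * b1 i.
have -> : c = \sum_t w t * c by rewrite -mulr_suml w1 mul1r.
rewrite -sumrB.
by apply: eq_bigr => t _; rewrite innerZr lagrangianE mulrBr.
Qed.

Lemma exists_le_average k (w f : 'I_k -> R) :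
  (forall t, 0 <= w t) -> \sum_t w t = 1 -> exists t, f t <= \sum_t w t * f t.
Proof.
move=> w0 w1; set c := \sum_t _; apply/not_existsP => f_gt.
have fc_gt0 t : 0 < f t - c by rewrite subr_gt0 ltNge; apply/negP/f_gt.
have : \sum_t w t * (f t - c) = 0.
  by under eq_bigr do rewrite mulrBr; rewrite sumrB -mulr_suml w1 mul1r subrr.
move/(psumr_eq0P (fun t _ => mulr_ge0 (w0 t) (ltW (fc_gt0 t)))) => wfc0.
move/eqP: w1; rewrite big1 ?(eq_sym 0) ?oner_eq0 // => t _.
by have /eqP := wfc0 t isT; rewrite mulf_eq0 (gt_eqF (fc_gt0 t)) orbF => /eqP.
Qed.

Lemma lagrangian_weak_duality S lam X : psd S -> lin_eq A1 b1 X -> psd X ->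
  conv P X -> exists2 Y, P Y & lagrangian S lam Y <= inner C X.
Proof.
move=> pS lX pX [k [w [Y [w0 w1 PY eX]]]].
have [t Yt_le] := exists_le_average (lagrangian S lam \o Y) w0 w1.
exists (Y t) => //; apply: le_trans Yt_le _.
rewrite -lagrangian_comb // -eX /lagrangian big1 => [|i _]; last by rewrite lX subrr mulr0.
by rewrite addr0 lerBlDr lerDl inner_psd_ge0.
Qed.

Section Separation.
Variable a : R.
Local Notation Ires := ('I_m1 + 'I_n * 'I_n + unit)%type.

Definition residual X Z s : Ires -> R := fun k =>
  match k with
  | inl (inl l) => inner (A1 l) X - b1 l
  | inl (inr (i, j)) => X i j - Z i j
  | inr _ => inner C X - s
  end.

Definition admissible X Z s := [/\ conv P X, psd Z & s <= a].

Lemma sum_Ires (f : Ires -> R) : \sum_k f k =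
  \sum_l f (inl (inl l)) + \sum_i \sum_j f (inl (inr (i, j))) + f (inr tt).
Proof.
rewrite !big_sumType /= pair_big /=.
by congr (_ + _ + _); [apply: eq_bigr => -[] | rewrite (big_pred1 tt) // => -[]].
Qed.

Lemma residual_dot X Z s X' Z' s' : symmx (X - Z) ->
  \sum_k residual X Z s k * residual X' Z' s' k =
  \sum_l (inner (A1 l) X - b1 l) * (inner (A1 l) X' - b1 l) +
  inner (X - Z) (X' - Z') + (inner C X - s) * (inner C X' - s').
Proof.
move=> sXZ; rewrite sum_Ires inner_entries //; congr (_ + _ + _).
by apply: eq_bigr => i _; apply: eq_bigr => j _; rewrite !mxE.
Qed.

Lemma residual_segment X Z s X' Z' s' t k :
  residual ((1 - t) *: X + t *: X') ((1 - t) *: Z + t *: Z') ((1 - t) * s + t * s') k =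
  residual X Z s k + t * (residual X' Z' s' k - residual X Z s k).
Proof. by case: k => [[l|[i j]]|[]] /=; rewrite ?innerDr ?innerZr ?mxE /=; ring. Qed.

Lemma admissible_segment X Z s X' Z' s' t :
  admissible X Z s -> admissible X' Z' s' -> 0 <= t <= 1 ->
  admissible ((1 - t) *: X + t *: X') ((1 - t) *: Z + t *: Z') ((1 - t) * s + t * s').
Proof.
move=> [cX pZ sa] [cX' pZ' sa'] t01; have /andP[t0 t1] := t01.
split; first exact: conv_segment.
  by apply: psdD; apply: psdZ; rewrite ?subr_ge0.
nra.
Qed.

Lemma residual_nearest_dot Xs Zs ss : admissible Xs Zs ss ->
  (forall X Z s, admissible X Z s ->
     sqnorm (residual Xs Zs ss) <= sqnorm (residual X Z s)) ->
  forall X Z s, admissible X Z s ->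
  sqnorm (residual Xs Zs ss) <= \sum_k residual Xs Zs ss k * residual X Z s k.
Proof.
move=> adms smin X Z s adm.
pose V := [set r | exists X Z s, admissible X Z s /\ r = residual X Z s].
apply: (@nearest_point_dot _ _ V); last by exists X, Z, s.
  move=> _ [X' [Z' [s' [adm' ->]]]] t /andP[t0 t1].
  exists ((1 - t) *: Xs + t *: X'), ((1 - t) *: Zs + t *: Z'), ((1 - t) * ss + t * s').
  split; first by apply: admissible_segment; rewrite ?(ltW t0).
  by apply/funext => k; rewrite residual_segment.
by move=> _ [X' [Z' [s' [adm' ->]]]]; apply: smin.
Qed.

Section NearestResidual.
Variables (X0 Xs Zs : 'M[R]_n) (ss : R).
Hypotheses (PX0 : P X0) (lX0 : lin_eq A1 b1 X0) (pX0 : psd X0).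
Hypothesis relax_gt : forall X, lin_eq A1 b1 X -> psd X -> conv P X -> a < inner C X.
Hypothesis adms : admissible Xs Zs ss.
Hypothesis smin : forall X Z s, admissible X Z s ->
  sqnorm (residual Xs Zs ss) <= sqnorm (residual X Z s).

Local Notation q := (sqnorm (residual Xs Zs ss)).
Local Notation E := (Xs - Zs).
Local Notation rho := (inner C Xs - ss).

Lemma nearest_symmx : symmx E.
Proof.
have [cXs pZs _] := adms.
by rewrite /symmx linearB /= (psd_symmx pZs) (conv_symmx _ cXs) // => Y [].
Qed.

Lemma nearest_ineq X Z s : admissible X Z s ->
  q <= \sum_l (inner (A1 l) Xs - b1 l) * (inner (A1 l) X - b1 l) +
       inner E (X - Z) + rho * (inner C X - s).
Proof.
move=> adm; rewrite -residual_dot; last exact: nearest_symmx.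
exact: (residual_nearest_dot adms smin adm).
Qed.

Lemma nearest_sqnormE :
  q = \sum_l (inner (A1 l) Xs - b1 l) * (inner (A1 l) Xs - b1 l) +
      inner E E + rho * rho.
Proof.
rewrite -residual_dot; last exact: nearest_symmx.
by apply: eq_bigr => k _; rewrite expr2.
Qed.

Lemma nearest_sqnorm_gt0 : 0 < q.
Proof.
have [cXs pZs ssa] := adms.
rewrite lt_def sqnorm_ge0 andbT; apply/eqP => /sqnorm_eq0 r0.
have lXs : lin_eq A1 b1 Xs.
  by move=> l; apply/eqP; rewrite -subr_eq0; apply/eqP/(r0 (inl (inl l))).
have eXZ : Xs = Zs.
  by apply/matrixP => i j; apply/eqP; rewrite -subr_eq0; apply/eqP/(r0 (inl (inr (i, j)))).
have eC : inner C Xs = ss by apply/eqP; rewrite -subr_eq0; apply/eqP/(r0 (inr tt)).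
by have := relax_gt lXs; rewrite {1}eXZ eC ltNge ssa => /(_ pZs cXs).
Qed.

Lemma nearest_psd : psd (- E).
Proof.
have [cXs pZs ssa] := adms.
apply/psdE; split=> [|v]; first by rewrite /symmx linearN /= nearest_symmx.
have := nearest_ineq (And3 cXs (psdD pZs (psd_rank1 v)) ssa).
rewrite (_ : Xs - (Zs + rank1 v) = E - rank1 v); last by rewrite opprD addrA.
by rewrite innerBr qform_mxN -inner_rank1 nearest_sqnormE; lra.
Qed.

Lemma nearest_ineq_Pset Y : P Y ->
  q <= \sum_l (inner (A1 l) Xs - b1 l) * (inner (A1 l) Y - b1 l) +
       inner E Y + rho * (inner C Y - a).
Proof.
move=> PY; have := nearest_ineq (And3 (sub_conv PY) (psd0 _ _) (lexx a)).
by rewrite subr0.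
Qed.

Lemma nearest_rho_gt0 : 0 < rho.
Proof.
have [cXs pZs ssa] := adms.
have rho_ge0 : 0 <= rho.
  have ss1_le : ss - 1 <= a by lra.
  have := nearest_ineq (And3 cXs pZs ss1_le).
  by have := nearest_sqnormE; have := nearest_sqnorm_gt0; nra.
rewrite lt_def rho_ge0 andbT; apply/eqP => rho0.
have := nearest_ineq_Pset PX0; rewrite rho0 mul0r addr0 big1 => [|l _]; last first.
  by rewrite lX0 subrr mulr0.
have := inner_psd_ge0 nearest_psd pX0; rewrite innerNl.
by have := nearest_sqnorm_gt0; lra.
Qed.

Lemma multipliers_of_nearest :
  exists S lam, psd S /\ forall Y, P Y -> a <= lagrangian S lam Y.
Proof.
have rho_gt0 := nearest_rho_gt0.
exists (rho^-1 *: - E), (fun l => (inner (A1 l) Xs - b1 l) / rho).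
split=> [|Y PY]; first by apply: psdZ nearest_psd; rewrite invr_ge0 ltW.
have := nearest_ineq_Pset PY; set sigma := \sum_l _ => ineqY.
rewrite /lagrangian innerZl innerNl.
have -> : \sum_l (inner (A1 l) Xs - b1 l) / rho * (inner (A1 l) Y - b1 l) =
          rho^-1 * sigma.
  by rewrite /sigma mulr_sumr; apply: eq_bigr => l _; rewrite mulrAC mulrC.
rewrite -subr_ge0 (_ : _ - a = rho^-1 * (rho * (inner C Y - a) + inner E Y + sigma)).
  have q_gt0 := nearest_sqnorm_gt0.
  by apply: mulr_ge0; [rewrite invr_ge0 ltW | lra].
by field; rewrite gt_eqF.
Qed.

End NearestResidual.

Lemma residual_far X Z s M d : 0 <= d -> (forall i j, `|X i j| <= M) ->
  s < - (\sum_i \sum_j `|C i j| * M + d) \/ (exists i j, M + d < `|Z i j|) ->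
  d ^+ 2 < sqnorm (residual X Z s).
Proof.
move=> d_ge0 XM [s_lt|[i [j Zij_gt]]].
  apply: lt_le_trans (sqr_le_sqnorm _ (inr tt)) => /=.
  have := inner_norm_le C XM; rewrite ler_norml => /andP[CX_ge _].
  have gap : d < inner C X - s by lra.
  nra.
apply: lt_le_trans (sqr_le_sqnorm _ (inl (inr (i, j)))) => /=.
rewrite -[(X i j - Z i j) ^+ 2]real_normK ?num_real //.
have := lerB_dist (Z i j) (X i j); rewrite distrC => dist_ge.
have gap : d < `|X i j - Z i j| by have := XM i j; lra.
nra.
Qed.

Local Notation N := (n * n).+1.
Local Notation Ienc := ('I_N + 'I_N * ('I_n * 'I_n) + ('I_n * 'I_n + unit))%type.
Local Notation Tenc := {ptws Ienc -> R}.

(* A point of Tenc encodes the weights and points of a convex combination of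
   N points of P (enough, by Caratheodory's theorem), together with Z and s. *)
Definition zw (z : Tenc) t := z (inl (inl t)).
Definition zY (z : Tenc) t : 'M[R]_n := \matrix_(i, j) z (inl (inr (t, (i, j)))).
Definition zZ (z : Tenc) : 'M[R]_n := \matrix_(i, j) z (inr (inl (i, j))).
Definition zs (z : Tenc) := z (inr (inr tt)).
Definition zX (z : Tenc) := \sum_t zw z t *: zY z t.

Definition enc_box lo MZ : set Tenc := [set z |
  (forall t, 0 <= zw z t) /\ \sum_t zw z t = 1 /\ (forall t, P (zY z t)) /\
  psd (zZ z) /\ lo <= zs z /\ zs z <= a /\
  (forall i j, - MZ <= zZ z i j) /\ (forall i j, zZ z i j <= MZ)].

Lemma continuous_zY t i j : continuous (fun z => zY z t i j).
Proof.
rewrite (_ : (fun z => _) = fun z : Tenc => z (inl (inr (t, (i, j))))).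
  exact: continuous_coord.
by apply/funext => z; rewrite mxE.
Qed.

Lemma continuous_zZ i j : continuous (fun z => zZ z i j).
Proof.
rewrite (_ : (fun z => _) = fun z : Tenc => z (inr (inl (i, j)))).
  exact: continuous_coord.
by apply/funext => z; rewrite mxE.
Qed.

Lemma continuous_zX i j : continuous (fun z => zX z i j).
Proof.
rewrite (_ : (fun z => _) = fun z => \sum_t zw z t * zY z t i j).
  apply: continuous_sum_ptws => t.
  by apply: continuousM_ptws; [apply: continuous_coord | apply: continuous_zY].
by apply/funext => z; rewrite summxE; apply: eq_bigr => t _; rewrite mxE.
Qed.

Lemma continuous_sqnorm_residual :
  continuous (fun z => sqnorm (residual (zX z) (zZ z) (zs z))).
Proof.
apply: continuous_sum_ptws => k.
have cont_r : continuous (fun z => residual (zX z) (zZ z) (zs z) k).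
  case: k => [[l|[i j]]|[]] /=; apply: continuousB_ptws.
  - exact/continuous_inner_ptws/continuous_zX.
  - exact: continuous_cst_ptws.
  - exact: continuous_zX.
  - exact: continuous_zZ.
  - exact/continuous_inner_ptws/continuous_zX.
  - exact: continuous_coord.
rewrite (_ : (fun z => _) = fun z => residual (zX z) (zZ z) (zs z) k *
                                     residual (zX z) (zZ z) (zs z) k).
  exact: continuousM_ptws.
by apply/funext => z; rewrite expr2.
Qed.

Lemma closed_enc_box lo MZ : closed (enc_box lo MZ).
Proof.
apply: closedI.
  apply: closed_forall => t; apply: closed_lefun; first exact: continuous_cst_ptws.
  exact: continuous_coord.
apply: closedI.
  apply: closed_eqfun; last exact: continuous_cst_ptws.
  by apply: continuous_sum_ptws => t; apply: continuous_coord.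
apply: closedI.
  by apply: closed_forall => t; apply: closed_Pset_ptws; apply: continuous_zY.
apply: closedI; first by apply: closed_psd_ptws; apply: continuous_zZ.
apply: closedI.
  by apply: closed_lefun; [apply: continuous_cst_ptws | apply: continuous_coord].
apply: closedI.
  by apply: closed_lefun; [apply: continuous_coord | apply: continuous_cst_ptws].
apply: closedI; apply: closed_forall => i; apply: closed_forall => j.
  by apply: closed_lefun; [apply: continuous_cst_ptws | apply: continuous_zZ].
by apply: closed_lefun; [apply: continuous_zZ | apply: continuous_cst_ptws].
Qed.

Lemma enc_box_admissible lo MZ z :
  enc_box lo MZ z -> admissible (zX z) (zZ z) (zs z).
Proof.
by case=> w0 [w1 [PY [pZ [_ [sa _]]]]]; split=> //; exists N, (zw z), (zY z).
Qed.

Lemma enc_box_bounded lo MZ M : (forall Y, P Y -> forall i j, `|Y i j| <= M) ->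
  forall z, enc_box lo MZ z -> forall k, `|z k| <= 1 + `|M| + `|MZ| + `|lo| + `|a|.
Proof.
move=> PM z [w0 [w1 [PY [_ [slo [sa [Zlo Zhi]]]]]]] k.
have := normr_ge0 M; have := normr_ge0 MZ; have := normr_ge0 lo; have := normr_ge0 a.
have /andP[lo1 lo2] : - `|lo| <= lo <= `|lo| by rewrite -ler_norml.
have /andP[a1 a2] : - `|a| <= a <= `|a| by rewrite -ler_norml.
case: k => [[t|[t [i j]]]|[[i j]|[]]] => *.
- have : zw z t <= 1 by rewrite -w1 (bigD1 t) //= lerDl sumr_ge0.
  by have := w0 t; rewrite /zw => *; rewrite ger0_norm //; lra.
- by have := PM _ (PY t) i j; rewrite mxE; have := ler_norm M; lra.
- have : `|z (inr (inl (i, j)))| <= MZ.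
    by rewrite ler_norml; have := Zlo i j; have := Zhi i j; rewrite !mxE => -> ->.
  by have := ler_norm MZ; lra.
- have : `|zs z| <= `|lo| + `|a| by rewrite ler_norml; apply/andP; split; lra.
  by rewrite /zs; lra.
Qed.

Lemma enc_box_of_admissible lo MZ X Z s : admissible X Z s -> lo <= s ->
  (forall i j, `|Z i j| <= MZ) ->
  exists2 z, enc_box lo MZ z & [/\ zX z = X, zZ z = Z & zs z = s].
Proof.
move=> [/caratheodory[w [Y [w0 w1 PY eX]]] pZ sa] slo ZM.
pose z : Tenc := fun k => match k with
  | inl (inl t) => w t
  | inl (inr (t, (i, j))) => Y t i j
  | inr (inl (i, j)) => Z i j
  | inr (inr _) => s
  end.
have eY t : zY z t = Y t by apply/matrixP => i j; rewrite mxE.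
have eZ : zZ z = Z by apply/matrixP => i j; rewrite mxE.
exists z; last by split=> //; rewrite eX; apply: eq_bigr => t _; rewrite eY.
rewrite /enc_box /= eZ; do 3 split=> //; first by move=> t; rewrite eY.
by do 4 split=> //; move=> i j; have := ZM i j; rewrite ler_norml => /andP[].
Qed.

Lemma residual_argmin X0 : mx_bounded P -> P X0 ->
  exists Xs Zs ss, admissible Xs Zs ss /\
    forall X Z s, admissible X Z s ->
    sqnorm (residual Xs Zs ss) <= sqnorm (residual X Z s).
Proof.
move=> [M0 PM0] PX0; pose M := `|M0|.
have PM Y : P Y -> forall i j, `|Y i j| <= M.
  by move=> PY i j; apply: le_trans (PM0 Y PY i j) (ler_norm _).
(* Outside the box lo <= s, |Z i j| <= MZ the residual is longer than the one
   of (X0, 0, a), so minimizing over the (compact) encoded box suffices. *)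
pose F0 := sqnorm (residual X0 0 a); pose d := F0 + 1 + `|a|.
pose lo := - (\sum_i \sum_j `|C i j| * M + d); pose MZ := M + d.
have F0_ge0 : 0 <= F0 by apply: sqnorm_ge0.
have d_gt : F0 < d ^+ 2 by have := normr_ge0 a; rewrite /d; nra.
have lo_le_a : lo <= a.
  have : 0 <= \sum_i \sum_j `|C i j| * M.
    by apply/sumr_ge0 => i _; apply/sumr_ge0 => j _; rewrite mulr_ge0 ?normr_ge0.
  have /andP[a_ge _] : - `|a| <= a <= `|a| by rewrite -ler_norml.
  by rewrite /lo /d; lra.
have adm0 : admissible X0 0 a := And3 (sub_conv PX0) (psd0 _ _) (lexx a).
have [z0 box_z0 [eX0 eZ0 es0]] :
    exists2 z, enc_box lo MZ z & [/\ zX z = X0, zZ z = 0 & zs z = a].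
  apply: enc_box_of_admissible => // i j.
  by rewrite mxE normr0 /MZ /d addr_ge0 ?normr_ge0 // ?addr_ge0.
have [zm box_zm zm_min] := bounded_closed_argmin (ex_intro _ z0 box_z0)
  (@closed_enc_box lo MZ) (enc_box_bounded PM) continuous_sqnorm_residual.
exists (zX zm), (zZ zm), (zs zm); split; first exact: enc_box_admissible box_zm.
move=> X Z s adm.
have [[slo ZM]|out] := pselect (lo <= s /\ forall i j, `|Z i j| <= MZ).
  by have [z box_z [<- <- <-]] := enc_box_of_admissible adm slo ZM; apply: zm_min.
have := zm_min z0 box_z0; rewrite eX0 eZ0 es0 -/F0 => zm_le; apply/ltW.
apply: (le_lt_trans zm_le); apply: (lt_trans d_gt).
have [cX _ _] := adm; apply: residual_far (conv_entry_bound PM cX) _.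
  by rewrite /d addr_ge0 ?normr_ge0 // addr_ge0.
have [slo|s_lt] := leP lo s; [right | by left].
apply: contrapT => noZ; apply: out; split=> // i j; rewrite leNgt; apply/negP => Zij.
by apply: noZ; exists i, j.
Qed.

End Separation.

Lemma relaxation_multipliers a X0 :
  mx_bounded P -> P X0 -> lin_eq A1 b1 X0 -> psd X0 ->
  (forall X, lin_eq A1 b1 X -> psd X -> conv P X -> a < inner C X) ->
  exists S lam, psd S /\ forall Y, P Y -> a <= lagrangian S lam Y.
Proof.
move=> Pbd PX0 lX0 pX0 relax_gt.
have [Xs [Zs [ss [adm smin]]]] := residual_argmin a Pbd PX0.
exact: multipliers_of_nearest PX0 lX0 pX0 relax_gt adm smin.
Qed.

End LagrangianDuality.

Theorem theorem1 (R : realType) (n m1 m2 : nat)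
  (C : 'M[R]_n) (A1 : 'I_m1 -> 'M[R]_n) (b1 : 'I_m1 -> R)
  (A2 : 'I_m2 -> 'M[R]_n) (b2 : 'I_m2 -> R)
  (J : {set 'I_n * 'I_n}) (B : 'I_n -> 'I_n -> seq int) :
  symmx C -> (forall i, symmx (A1 i)) -> (forall i, symmx (A2 i)) ->
  mx_bounded (Pset A2 b2 J B) ->
  let F := [set X | Pset A2 b2 J B X /\ lin_eq A1 b1 X /\ psd X] in
  F !=set0 -> mx_bounded F ->
  let g := fun (S : 'M[R]_n) (lam : 'I_m1 -> R) =>
    ereal_inf [set ((inner C X - inner S X
                     + \sum_(i < m1) lam i * (inner (A1 i) X - b1 i))%:E)%E
              | X in Pset A2 b2 J B] in
  let zLD := ereal_sup [set g S lam | S in [set S : 'M[R]_n | psd S] & lam in [set: 'I_m1 -> R]] in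
  let zhat := ereal_inf [set (inner C X)%:E
              | X in [set X | lin_eq A1 b1 X /\ psd X /\ conv (Pset A2 b2 J B) X]] in
  zLD = zhat.
Proof.
move=> _ _ _ Pbd F [X0 [PX0 [lX0 pX0]]] _ g zLD zhat.
have zhat_le X : lin_eq A1 b1 X -> psd X -> conv (Pset A2 b2 J B) X ->
    (zhat <= (inner C X)%:E)%E.
  by move=> lX pX cX; apply: ereal_inf_lbound; exists X.
apply/le_anti/andP; split.
  apply: ge_ereal_sup => _ [S pS [lam _ <-]].
  apply: le_ereal_inf_tmp => _ [X [lX [pX cX]] <-].
  have [Y PY LY] := lagrangian_weak_duality C lam pS lX pX cX.
  by apply: ge_ereal_inf; exists (lagrangian C A1 b1 S lam Y)%:E => //; exists Y.
have := zhat_le X0 lX0 pX0 (sub_conv PX0).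
case zhatE : zhat => [r | | ] // _; last exact: leNye.
apply/lee_subgt0Pr => e e_gt0.
have [S [lam [pS LS]]] : exists S lam, psd S /\ forall Y, Pset A2 b2 J B Y ->
    r - e <= lagrangian C A1 b1 S lam Y.
  apply: relaxation_multipliers Pbd PX0 lX0 pX0 _ => X lX pX cX.
  by have := zhat_le X lX pX cX; rewrite zhatE lee_fin; lra.
apply: (@le_trans _ _ (g S lam)).
  by apply: le_ereal_inf_tmp => _ [Y PY <-]; rewrite lee_fin; apply: LS.
by apply: ereal_sup_ubound; exists S => //; exists lam.
Qed.
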